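(* Let $0<\varepsilon < 1/25$ and let $\mathbb{F}$ be a field with $|\mathbb{F}| \ge n^2$. For every sufficiently large $n$, there exists a non-zero polynomial $Q \in \mathbb{F}[x_{1,1}, \ldots, x_{n,n}]$ of degree at most $n^3$ such that $Q(M)=0$ for every matrix $M \in \mathbb{F}^{n\times n}$ which is not $(\varepsilon n, \varepsilon n^2)$-rigid.
   Context: A matrix $M\in\mathbb{F}^{n\times n}$ is $(r,s)$-rigid if $M$ cannot be written as $M=R+S$ with $\mathrm{rank}(R)\le r$ and $S$ having at most $s$ non-zero entries. For a polynomial $Q$ in the $n^2$ variables $x_{i,j}$, $Q(M)$ denotes the evaluation at $x_{i,j}=M_{i,j}$. *)

From HB Require Import structures.
From mathcomp Require Import all_boot all_order all_algebra.
From mathcomp Require Import mpoly.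
Set Implicit Arguments. Unset Strict Implicit. Unset Printing Implicit Defensive.
Import Order.TTheory GRing.Theory Num.Theory.
Local Open Scope ring_scope.

Definition nnz (F : fieldType) (n : nat) (S : 'M[F]_n) : nat :=
  #|[set ij : 'I_n * 'I_n | S ij.1 ij.2 != 0]|.

Definition rigid (R : realFieldType) (F : fieldType) (n : nat) (r s : R)
    (M : 'M[F]_n) : Prop :=
  ~ exists (A S : 'M[F]_n),
      [/\ M = A + S, (\rank A)%:R <= r & (nnz S)%:R <= s].

(* Evaluation of a polynomial in the n^2 variables x_{i,j}; the variable
   x_{i,j} is the one of index mxvec_index i j in 'I_(n*n). *)
Definition mx_eval (F : fieldType) (n : nat) (Q : {mpoly F[n * n]})
    (M : 'M[F]_n) : F :=
  Q.@[fun k => mxvec M 0 k].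

From HB Require Import structures.
From mathcomp Require Import all_boot all_order all_algebra.
From mathcomp Require Import mpoly.
From mathcomp Require Import zify lra.
Set Implicit Arguments. Unset Strict Implicit. Unset Printing Implicit Defensive.
Import Order.TTheory GRing.Theory Num.Theory.
Local Open Scope ring_scope.

(* A matrix that is not (r, s)-rigid is a specialisation of the generic matrix
   U V + \sum_(t < s) z_t E_(T t), with unknowns U (n x r), V (r x n), z (length s) and
   a sparsity pattern T : 'I_s -> 'I_n * 'I_n.  For each of the (n^2)^s patterns,
   substituting the generic matrix into a monomial of individual degrees <= n gives a
   polynomial of degree <= 2n^3 in 2nr + s unknowns, described by (2n^3 + 1)^(2nr + s)
   coefficients.  For r = n/25 and s = n^2/25 these linear conditions are fewer than the
   (n + 1)^(n^2) monomials, so some nonzero combination Q of the monomials vanishes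
   identically after every substitution. *)

Section MsizeBounds.
Variables (R : idomainType) (k : nat).
Implicit Types p q : {mpoly R[k]}.

Lemma msizeM_leD p q a b :
  (msize p <= a.+1)%N -> (msize q <= b.+1)%N -> (msize (p * q) <= (a + b).+1)%N.
Proof.
have [->|nz_p] := eqVneq p 0; first by rewrite mul0r msize0.
have [->|nz_q] := eqVneq q 0; first by rewrite mulr0 msize0.
rewrite msizeM //; lia.
Qed.

Lemma msize_prod_leD (I : Type) (r : seq I) (P : pred I) (F : I -> {mpoly R[k]})
    (a : I -> nat) :
  (forall i, P i -> msize (F i) <= (a i).+1)%N ->
  (msize (\prod_(i <- r | P i) F i) <= (\sum_(i <- r | P i) a i).+1)%N.
Proof.
move=> szF; elim/big_rec2: _ => [|i b p Pi szp]; first by rewrite msize1.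
exact: msizeM_leD (szF i Pi) szp.
Qed.

Lemma msizeXn_le p a e : (msize p <= a.+1)%N -> (msize (p ^+ e) <= (e * a).+1)%N.
Proof.
move=> szp; rewrite -[e]card_ord -prodr_const -sum_nat_const.
exact: msize_prod_leD.
Qed.

End MsizeBounds.

Definition mnm_ffun (k b : nat) (f : {ffun 'I_k -> 'I_b}) : 'X_{1..k} :=
  [multinom (f i : nat) | i < k].

Lemma mnm_ffun_inj k b : injective (@mnm_ffun k b).
Proof.
move=> f g /mnmP eq_fg; apply/ffunP => i; apply: val_inj.
by have := eq_fg i; rewrite !mnmE.
Qed.

Lemma mdeg_mnm_ffun k b (f : {ffun 'I_k -> 'I_b.+1}) : (mdeg (mnm_ffun f) <= k * b)%N.
Proof.
rewrite mdegE -[k in (k * b)%N]card_ord -sum_nat_const.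
by apply: leq_sum => i _; rewrite mnmE -ltnS.
Qed.

Lemma mpoly_eq0_of_mcoeff_ffun (R : nzRingType) k w (p : {mpoly R[k]}) :
  (msize p <= w.+1)%N -> (forall f : {ffun 'I_k -> 'I_w.+1}, p@_(mnm_ffun f) = 0) ->
  p = 0.
Proof.
move=> szp coef0; apply/mpolyP => m; rewrite mcoeff0.
have [small|] := boolP [forall i, m i <= w]%N.
  have -> : m = mnm_ffun [ffun i => inord (m i) : 'I_w.+1].
    by apply/mnmP => i; rewrite mnmE ffunE inordK // ltnS (forallP small).
  exact: coef0.
rewrite negb_forall => /existsP [i]; rewrite -ltnNge => big_mi.
apply/eqP; rewrite mcoeff_eq0; apply: msize_mdeg_ge.
by rewrite (leq_trans szp) // mdegE (bigD1 i) //= (leq_trans big_mi) ?leq_addr.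
Qed.

Lemma nonzero_left_kernel (F : fieldType) p q (A : 'M[F]_(p, q)) :
  (q < p)%N -> exists2 u : 'rV_p, u != 0 & u *m A = 0.
Proof.
move=> lt_qp; have : kermx A != 0.
  by rewrite -mxrank_eq0 mxrank_ker subn_eq0 -ltnNge (leq_ltn_trans (rank_leq_col A)).
by case/rowV0Pn => u /sub_kermxP uA0 nz_u; exists u.
Qed.

Section Annihilator.
Variables (F : fieldType) (m k D d : nat) (I : finType).
Variable phi : I -> m.-tuple {mpoly F[k]}.
Hypothesis msize_phi : forall i j, (msize (tnth (phi i) j) <= d.+1)%N.

Local Notation exps := {ffun 'I_m -> 'I_D.+1}.
Local Notation coef_index := (I * {ffun 'I_k -> 'I_(m * D * d).+1})%type.

Lemma msize_comp_mnm_ffun (f : exps) i :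
  (msize ('X_[mnm_ffun f] \mPo phi i) <= (m * D * d).+1)%N.
Proof.
rewrite comp_mpolyX.
apply: leq_trans (@msize_prod_leD _ _ _ _ _ _ (fun j => f j * d)%N _) _.
  by move=> j _; rewrite mnmE; apply: msizeXn_le.
rewrite ltnS -big_distrl /= leq_mul2r -[m in (m * D)%N]card_ord -sum_nat_const.
by rewrite leq_sum ?orbT // => j _; rewrite -ltnS.
Qed.

Definition comp_coef_mx : 'M[F]_(#|{: exps}|, #|{: coef_index}|) :=
  \matrix_(a, b)
    ('X_[mnm_ffun (enum_val a)] \mPo phi (enum_val b).1)@_(mnm_ffun (enum_val b).2).

Lemma exists_annihilating_mpoly : (#|I| * (m * D * d).+1 ^ k < D.+1 ^ m)%N ->
  exists Q : {mpoly F[m]},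
    [/\ Q != 0, (msize Q <= (m * D).+1)%N & forall i, Q \mPo phi i = 0].
Proof.
move=> card_lt.
have [u nz_u u0] : exists2 u : 'rV_#|{: exps}|, u != 0 & u *m comp_coef_mx = 0.
  by apply: nonzero_left_kernel; rewrite card_prod !card_ffun !card_ord.
pose Q := \sum_a u 0 a *: 'X_[mnm_ffun (enum_val a)].
have coefQ a : Q@_(mnm_ffun (enum_val a)) = u 0 a.
  rewrite raddf_sum (bigD1 a) //= big1 => [|b ne_ba].
    by rewrite mcoeffZ mcoeffX eqxx mulr1 addr0.
  rewrite mcoeffZ mcoeffX (inj_eq (@mnm_ffun_inj _ _)) (inj_eq enum_val_inj).
  by rewrite (negbTE ne_ba) mulr0.
exists Q; split.
- have [a nz_ua] : exists a, u 0 a != 0.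
    apply/existsP; apply: contraNT nz_u => /existsPn u_eq0.
    by apply/eqP/rowP => a; rewrite mxE; apply/eqP/negPn/u_eq0.
  by apply: contraNneq nz_ua => Q0; rewrite -coefQ Q0 mcoeff0.
- apply: leq_trans (msize_sum _ _ _) _; apply/bigmax_leqP => a _.
  by rewrite (leq_trans (msizeZ_le _ _)) // msizeX ltnS mdeg_mnm_ffun.
move=> i.
have compQ : Q \mPo phi i = \sum_a u 0 a *: ('X_[mnm_ffun (enum_val a)] \mPo phi i).
  by rewrite (raddf_sum (comp_mpoly (phi i))); apply: eq_bigr => a _; exact: comp_mpolyZ.
rewrite compQ; apply: (@mpoly_eq0_of_mcoeff_ffun _ _ (m * D * d)).
  apply: leq_trans (msize_sum _ _ _) _; apply/bigmax_leqP => a _.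
  by rewrite (leq_trans (msizeZ_le _ _)) ?msize_comp_mnm_ffun.
move=> g; have := congr1 (fun v : 'rV_#|{: coef_index}| => v 0 (enum_rank (i, g))) u0.
rewrite !mxE => <-; rewrite raddf_sum /=; apply: eq_bigr => a _.
by rewrite mcoeffZ mxE enum_rankK.
Qed.

End Annihilator.

Lemma mx_factor_rank_le (F : fieldType) m n r (A : 'M[F]_(m, n)) :
  (\rank A <= r)%N -> exists (U : 'M_(m, r)) (V : 'M_(r, n)), A = U *m V.
Proof.
move=> rkA; exists (col_base A *m pid_mx (\rank A)), (pid_mx (\rank A) *m row_base A).
rewrite mulmxA -[_ *m pid_mx _ *m pid_mx _]mulmxA mul_pid_mx.
by rewrite minnn (minn_idPr rkA) pid_mx_1 mulmx1 mulmx_base.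
Qed.

Lemma nnz_le_sum_delta (F : fieldType) n s (S : 'M[F]_n) (i0 : 'I_n) :
  (nnz S <= s)%N -> exists (T : {ffun 'I_s -> 'I_n * 'I_n}) (z : 'I_s -> F),
    S = \sum_(t < s) z t *: delta_mx (T t).1 (T t).2.
Proof.
rewrite /nnz; set supp := [set ij | _] => nnzS.
pose e := enum supp; have size_e : (size e <= s)%N by rewrite -cardE.
pose G ij := S ij.1 ij.2 *: delta_mx ij.1 ij.2.
exists [ffun t : 'I_s => nth (i0, i0) e t].
exists (fun t : 'I_s =>
  if (t < size e)%N then S (nth (i0, i0) e t).1 (nth (i0, i0) e t).2 else 0).
have S_supp : S = \sum_(ij in supp) G ij.
  rewrite {1}[S]matrix_sum_delta pair_big (bigID (mem supp)) /= addrC big1 ?add0r //.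
  by move=> ij; rewrite inE negbK => /eqP ->; rewrite scale0r.
rewrite {1}S_supp -big_enum (big_nth (i0, i0)) -/e big_mkord.
rewrite (big_ord_widen _ (fun t => G (nth (i0, i0) e t)) size_e).
by rewrite big_mkcond; apply: eq_bigr => t _; rewrite /G ffunE; case: ifP; rewrite ?scale0r.
Qed.

Section LowRankPlusSparse.
Variables (F : fieldType) (n r s : nat).

Definition lrs_var := ('I_n * 'I_r + 'I_r * 'I_n + 'I_s)%type.
Local Notation k := #|{: lrs_var}|.

Definition lrs_X (v : lrs_var) : {mpoly F[k]} := 'X_(enum_rank v).

Definition lrs_generic_mx (T : {ffun 'I_s -> 'I_n * 'I_n}) : 'M[{mpoly F[k]}]_n :=
  (\matrix_(i, l) lrs_X (inl (inl (i, l)))) *m (\matrix_(l, j) lrs_X (inl (inr (l, j))))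
  + \sum_(t < s) lrs_X (inr t) *: delta_mx (T t).1 (T t).2.

Lemma card_lrs_var : k = (n * r + r * n + s)%N.
Proof. by rewrite !card_sum !card_prod !card_ord. Qed.

Lemma msize_lrs_generic_mx T i j : (msize (lrs_generic_mx T i j) <= 3)%N.
Proof.
have msize_lrs_X v : (msize (lrs_X v) <= 2)%N by rewrite msizeX mdeg1.
rewrite !mxE summxE; apply: leq_trans (msizeD_le _ _) _; rewrite geq_max.
apply/andP; split; apply: leq_trans (msize_sum _ _ _) _; apply/bigmax_leqP => l _.
  by rewrite !mxE (@msizeM_leD _ _ _ _ 1 1).
rewrite !mxE mulr_natr; case: (_ && _);
  by rewrite ?mulr1n ?mulr0n ?msize0 ?(leq_trans (msize_lrs_X _)).
Qed.

Lemma lrs_generic_mx_eval (A S : 'M[F]_n) (i0 : 'I_n) :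
  (\rank A <= r)%N -> (nnz S <= s)%N ->
  exists T (x : 'I_k -> F), map_mx (meval x) (lrs_generic_mx T) = A + S.
Proof.
move=> rkA nnzS; have [U [V ->]] := mx_factor_rank_le rkA.
have [T [z ->]] := nnz_le_sum_delta i0 nnzS.
pose x (v : lrs_var) := match v with
  | inl (inl (i, l)) => U i l | inl (inr (l, j)) => V l j | inr t => z t end.
exists T, (fun v => x (enum_val v)).
rewrite map_mxD map_mxM map_mx_sum; congr (_ *m _ + _).
- by apply/matrixP => i l; rewrite !mxE /= /lrs_X mevalXU enum_rankK.
- by apply/matrixP => l j; rewrite !mxE /= /lrs_X mevalXU enum_rankK.
by apply: eq_bigr => t _; rewrite map_mxZ map_delta_mx /= /lrs_X mevalXU enum_rankK.
Qed.

End LowRankPlusSparse.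

Lemma mx_eval_map_meval (F : fieldType) n k (Q : {mpoly F[n * n]})
    (G : 'M[{mpoly F[k]}]_n) (x : 'I_k -> F) :
  mx_eval Q (map_mx (meval x) G) = (Q \mPo [tuple mxvec G 0 j | j < n * n]).@[x].
Proof.
rewrite comp_mpoly_meval /mx_eval -map_mxvec.
by apply: meval_eq => j; rewrite tnth_mktuple mxE.
Qed.

Lemma lrs_count n : (3 <= n)%N ->
  ((n * n) ^ (n ^ 2 %/ 25)
     * (n * n * n * 2).+1 ^ (n * (n %/ 25) + (n %/ 25) * n + n ^ 2 %/ 25)
   < n.+1 ^ (n * n))%N.
Proof.
move=> n_ge3; set r := (n %/ 25)%N; set s := (n ^ 2 %/ 25)%N.
have leq_pow a b e : (a <= b -> a ^ e <= b ^ e)%N.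
  by case: e => [|e] le_ab; rewrite ?expn0 ?leq_exp2r.
have r25 : (r * 25 <= n)%N by rewrite -leq_divRL.
have s25 : (s * 25 <= n * n)%N by rewrite -leq_divRL // mulnn.
have nr25 : (n * r * 25 <= n * n)%N by rewrite -mulnA leq_mul2l r25 orbT.
have base : ((n * n * n * 2).+1 <= n ^ 4)%N by rewrite !expnS expn0; nia.
(* The left side is at most n^(6s + 8nr), and 25 (6s + 8nr) <= 14 n^2. *)
apply: (@leq_ltn_trans (n ^ (2 * s + 4 * (n * r + r * n + s)))).
  by rewrite (expnD n) !(expnM n) mulnn leq_mul ?leq_pow.
apply: leq_trans (leq_pow _ _ _ (leqnSn n)); rewrite ltn_exp2l; last by lia.
by rewrite [(r * n)%N]mulnC; lia.
Qed.

Lemma leq_divn_of_ler_mul (R : realFieldType) (eps : R) a b c :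
  (0 < b)%N -> eps <= 1 / b%:R -> c%:R <= eps * a%:R -> (c <= a %/ b)%N.
Proof.
move=> b_gt0; rewrite ler_pdivlMr ?ltr0n // => eps_b c_le.
have a_ge0 : 0 <= a%:R :> R by [].
have b_ge0 : 0 <= b%:R :> R by [].
by rewrite leq_divRL // -(ler_nat R) natrM; nra.
Qed.

Theorem theorem1p1 (R : realFieldType) (eps : R) :
  0 < eps -> eps < 1 / 25%:R ->
  exists N : nat, forall n : nat, (N <= n)%N ->
  forall F : fieldType,
    (exists s : seq F, uniq s /\ (n ^ 2 <= size s)%N) ->
    exists Q : {mpoly F[n * n]},
      [/\ Q != 0, (msize Q <= (n ^ 3).+1)%N &
          forall M : 'M[F]_n,
            ~ rigid (eps * n%:R) (eps * (n ^ 2)%:R) M -> mx_eval Q M = 0].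
Proof.
move=> _ /ltW eps_le; exists 3%N => n n_ge3 F _.
set r := (n %/ 25)%N; set s := (n ^ 2 %/ 25)%N.
pose phi (T : {ffun 'I_s -> 'I_n * 'I_n}) :=
  [tuple mxvec (@lrs_generic_mx F n r s T) 0 j | j < n * n].
have msize_phi T j : (msize (tnth (phi T) j) <= 3)%N.
  rewrite tnth_mktuple; case/mxvec_indexP: j => i j.
  by rewrite mxvecE msize_lrs_generic_mx.
have [|Q [nz_Q msize_Q annihilates]] := exists_annihilating_mpoly (D := n) msize_phi.
  by rewrite card_ffun !card_prod !card_ord card_lrs_var; exact: lrs_count.
exists Q; split => //; first by rewrite !expnS expn0 muln1 mulnA.
move=> M nonrigid; have [//|nz_QM] := eqVneq (mx_eval Q M) 0; exfalso.
apply: nonrigid => -[A [S [M_AS rkA nnzS]]]; move: nz_QM; rewrite M_AS.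
have n_gt0 : (0 < n)%N by apply: leq_trans n_ge3.
have [T [x <-]] := lrs_generic_mx_eval (Ordinal n_gt0)
  (leq_divn_of_ler_mul (b := 25) isT eps_le rkA)
  (leq_divn_of_ler_mul (b := 25) isT eps_le nnzS).
by rewrite mx_eval_map_meval annihilates meval0 eqxx.
Qed.
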